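(* Let $G=(V,E)$ be a claw-free graph and $I$ a maximum cardinality independent set of $G$. Let $a,b\in I$, $a\ne b$, and let $X$ be a pack different from $V_{a,b}$. If there is an edge of $G$ with one endpoint in $V_{a,b}$ and the other in $X$, then $X$ and $V_{a,b}$ have a common leg, i.e., $X=V_a$ or $X=V_b$ or $X=V_{a,c}$ or $X=V_{b,c}$ for some $c\in I$.
   Context: Graphs are finite, simple, undirected; claw-free means no induced $K_{1,3}$. For $a\ne b$ in $I$ let $V_{a,b}=V_{b,a}=\{v\in V\setminus I: N(v)\cap I=\{a,b\}\}$, and for $a\in I$ let $V_a=\{v\in V\setminus I : N(v)\cap I=\{a\}\}$. These sets are called packs: the $V_a$ are $1$-packs with leg $a$, the $V_{a,b}$ are $2$-packs with legs $a$ and $b$. (Every vertex of $V\setminus I$ has one or two neighbours in $I$, so the packs partition $V\setminus I$.) *)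

(* A simple graph on a finite vertex type T is a
   symmetric irreflexive relation e : rel T. *)
From mathcomp Require Import all_boot.
Set Implicit Arguments. Unset Strict Implicit. Unset Printing Implicit Defensive.

Definition claw_free (T : finType) (e : rel T) : Prop :=
  forall x y z w : T, e x y -> e x z -> e x w ->
    y != z -> y != w -> z != w -> [|| e y z, e y w | e z w].

Definition independent (T : finType) (e : rel T) (S : {set T}) : Prop :=
  forall x y, x \in S -> y \in S -> ~~ e x y.

Definition maximum_independent (T : finType) (e : rel T) (I : {set T}) : Prop :=
  independent e I /\ forall S : {set T}, independent e S -> #|S| <= #|I|.

Definition pack1 (T : finType) (e : rel T) (I : {set T}) (a : T) : {set T} :=
  [set v | (v \notin I) && ([set u in I | e v u] == [set a])].

Definition pack2 (T : finType) (e : rel T) (I : {set T}) (a b : T) : {set T} :=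
  [set v | (v \notin I) && ([set u in I | e v u] == [set a; b])].

Definition is_pack (T : finType) (e : rel T) (I X : {set T}) : Prop :=
  (exists2 c, c \in I & X = pack1 e I c) \/
  (exists c d, [/\ c \in I, d \in I, c != d & X = pack2 e I c d]).

From mathcomp Require Import all_boot.
Set Implicit Arguments. Unset Strict Implicit.

(* Let u in V_{a,b} be adjacent to v in X.  If v were adjacent to neither a nor
   b, then u with neighbours a, b, v would be a claw (a and b are independent).
   So v sees a or b, and since the neighbourhood of v in I is exactly the set
   of legs of X, one of a, b is a leg of X. *)

Section Packs.

Variables (T : finType) (e : rel T) (I : {set T}).

Lemma pack1_notin c v : v \in pack1 e I c -> v \notin I.
Proof. by rewrite inE => /andP[]. Qed.

Lemma pack2_notin c d v : v \in pack2 e I c d -> v \notin I.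
Proof. by rewrite inE => /andP[]. Qed.

Lemma pack1_leg c v x : v \in pack1 e I c -> x \in I -> e v x -> x = c.
Proof.
rewrite inE => /andP[_ /eqP/setP/(_ x)]; rewrite !inE => nbr xI vx.
by apply/eqP; move: nbr; rewrite xI vx.
Qed.

Lemma pack2_leg c d v x :
  v \in pack2 e I c d -> x \in I -> e v x -> (x == c) || (x == d).
Proof.
rewrite inE => /andP[_ /eqP/setP/(_ x)]; rewrite !inE => nbr xI vx.
by move: nbr; rewrite xI vx.
Qed.

Lemma pack2_adj c d v : v \in pack2 e I c d -> c \in I -> d \in I -> e v c && e v d.
Proof.
rewrite inE => /andP[_ /eqP/setP nbr] cI dI.
move: (nbr c) (nbr d); rewrite !inE cI dI !eqxx orbT /=.
by move=> -> ->.
Qed.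

Lemma pack2C c d : pack2 e I c d = pack2 e I d c.
Proof. by apply/setP => x; rewrite !inE setUC. Qed.

Lemma pack2_with_leg a c d : c != d -> (a == c) || (a == d) ->
  exists2 f, (f == c) || (f == d) & f != a /\ pack2 e I c d = pack2 e I a f.
Proof.
move=> cd /orP[/eqP->|/eqP->].
  by exists d; rewrite ?eqxx ?orbT // eq_sym.
by exists c; rewrite ?eqxx // pack2C.
Qed.

End Packs.

Lemma claw_free_adj_leg (T : finType) (e : rel T) (I : {set T}) a b u v :
  symmetric e -> claw_free e -> independent e I ->
  a \in I -> b \in I -> a != b -> v \notin I ->
  e u a -> e u b -> e u v -> e v a || e v b.
Proof.
move=> sym claw indI aI bI ab vI ua ub uv.
have av : a != v by apply: contraNneq vI => <-.
have bv : b != v by apply: contraNneq vI => <-.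
move: (claw u a b v ua ub uv ab av bv).
by rewrite (negbTE (indI a b aI bI)) /= (sym a) (sym b).
Qed.

Theorem lemma5 (T : finType) (e : rel T) (I : {set T}) (a b : T) (X : {set T}) :
  symmetric e -> irreflexive e -> claw_free e ->
  maximum_independent e I ->
  a \in I -> b \in I -> a != b ->
  is_pack e I X -> X != pack2 e I a b ->
  (exists u v, [/\ u \in pack2 e I a b, v \in X & e u v]) ->
  X = pack1 e I a \/ X = pack1 e I b \/
  (exists c, c \in I /\
     ((c != a /\ X = pack2 e I a c) \/ (c != b /\ X = pack2 e I b c))).
Proof.
move=> sym _ claw [indI _] aI bI ab Xpack _ [u [v [uP vX uv]]].
have /andP[ua ub] := pack2_adj uP aI bI.
have seen : v \notin I -> e v a || e v b.
  by move=> vI; apply: (claw_free_adj_leg sym claw indI aI bI ab vI ua ub uv).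
case: Xpack => [[c cI XE]|[c [d [cI dI cd XE]]]]; rewrite XE in vX *.
  have /orP[va|vb] := seen (pack1_notin vX).
    by left; rewrite -(pack1_leg vX aI va).
  by right; left; rewrite -(pack1_leg vX bI vb).
right; right.
have /orP[va|vb] := seen (pack2_notin vX).
  have [f fcd [fa ->]] := pack2_with_leg e I cd (pack2_leg vX aI va).
  by exists f; split; [case/orP: fcd => /eqP->|left].
have [f fcd [fb ->]] := pack2_with_leg e I cd (pack2_leg vX bI vb).
by exists f; split; [case/orP: fcd => /eqP->|right].
Qed.
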